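(* Let $Q:[0,k_{\text{crit}}]\to[0,\infty)$ be three times differentiable, strictly increasing with $Q'>0$, concave ($Q''\le 0$), with $Q(0)=0$ and $Q'''\le 0$. Let $k(q)$ denote the inverse function of $Q$ on $[0,Q(k_{\text{crit}})]$ and define $\frac{dN}{dx}(q)=q\,k'(q)-k(q)$. Then $\frac{dN}{dx}$ is monotonically increasing and convex in $q$.
   Context: $Q$ is the free-flow branch of a traffic fundamental diagram (flow as a function of density); the condition $Q'''\le 0$ corresponds to aggressive driving ($v''(k)\le0$ for $v(k)=Q(k)/k$). The quantity $q k'(q)-k(q)$ is the rate of change of the cumulative vehicle count per unit distance along a kinematic wave carrying constant flow $q$. *)

From Stdlib Require Import Reals.
From Coquelicot Require Import Coquelicot.
Open Scope R_scope.

Definition Icc (a b : R) (x : R) : Prop := a <= x <= b.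

(* Derivative of f at x relative to the set D (one-sided at endpoints of an
   interval): the difference quotient (f y - f x)/(y - x) tends to l as y -> x
   with y in D, y <> x. *)
Definition is_deriv_within (f : R -> R) (D : R -> Prop) (x l : R) : Prop :=
  filterlim (fun y => (f y - f x) / (y - x))
            (within (fun y => D y /\ y <> x) (locally x)) (locally l).

Definition nondecreasing_on (D : R -> Prop) (g : R -> R) : Prop :=
  forall a b, D a -> D b -> a <= b -> g a <= g b.

Definition convex_on (D : R -> Prop) (g : R -> R) : Prop :=
  forall a b t, D a -> D b -> 0 <= t <= 1 ->
    g (t * a + (1 - t) * b) <= t * g a + (1 - t) * g b.

(** Write [x = k q] for the density carrying flow [q]. Then
    [dN/dx (q) = q / Q'(x) - x =: g x] with [g' = - Q Q'' / Q'^2], so by the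
    Cauchy mean value theorem every chord slope of [dN/dx] over [[q1, q2]] is a
    value [h c] of [h = - Q Q'' / Q'^3] at some [c] in [[k q1, k q2]].
    Concavity and [Q >= 0] give [h >= 0], hence monotonicity; [Q''' <= 0] makes
    [h] nondecreasing, so, [k] being increasing, the chord slopes increase,
    which is convexity. *)

From Stdlib Require Import Reals Lra.
From Coquelicot Require Import Coquelicot.
Open Scope R_scope.

Definition continuous_within (D : R -> Prop) (f : R -> R) (x : R) : Prop :=
  forall eps, 0 < eps -> exists d, 0 < d /\
    forall y, D y -> Rabs (y - x) < d -> Rabs (f y - f x) < eps.

Lemma is_deriv_withinP f D x l :
  is_deriv_within f D x l <->
  forall eps, 0 < eps -> exists d, 0 < d /\
    forall y, D y -> y <> x -> Rabs (y - x) < d ->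
      Rabs ((f y - f x) / (y - x) - l) < eps.
Proof.
  split.
  - intros H eps He.
    destruct (proj1 (filterlim_locally _ _) H (mkposreal eps He)) as [d Hd].
    exists d; split; [apply cond_pos |].
    intros y Dy Hne Hy; apply (Hd y); [exact Hy | split; auto].
  - intros H; apply filterlim_locally; intros eps.
    destruct (H eps (cond_pos eps)) as [d [Hd Hd']].
    exists (mkposreal d Hd); intros y Hy [Dy Hne]; apply Hd'; auto.
Qed.

Lemma is_deriv_within_continuous f D x l :
  is_deriv_within f D x l -> continuous_within D f x.
Proof.
  intros H eps He.
  destruct (proj1 (is_deriv_withinP f D x l) H 1 Rlt_0_1) as [d [Hd Hd']].
  set (M := Rabs l + 1).
  assert (HM : 0 < M) by (unfold M; pose proof (Rabs_pos l); lra).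
  exists (Rmin d (eps / M)); split.
  { apply Rmin_glb_lt; [lra | apply Rdiv_lt_0_compat; lra]. }
  intros y Dy Hy.
  pose proof (Rmin_l d (eps / M)); pose proof (Rmin_r d (eps / M)).
  destruct (Req_dec y x) as [-> | Hne].
  { rewrite Rminus_diag, Rabs_R0; lra. }
  set (s := (f y - f x) / (y - x)).
  assert (Hs : Rabs s < M).
  { pose proof (Hd' y Dy Hne ltac:(lra)); pose proof (Rabs_triang_inv s l).
    unfold M, s in *; lra. }
  replace (f y - f x) with (s * (y - x)) by (unfold s; field; lra).
  rewrite Rabs_mult.
  assert (M * (eps / M) = eps) by (field; lra).
  pose proof (Rabs_pos s); pose proof (Rabs_pos (y - x)); nra.
Qed.

(** Extending a function on [[a, b]] by constants turns its derivatives
    relative to [[a, b]] into ordinary ones at interior points, where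
    Coquelicot's mean value theorem applies. *)
Definition clamp (a b y : R) : R := Rmax a (Rmin b y).

Definition extend (a b : R) (f : R -> R) (y : R) : R := f (clamp a b y).

Lemma clamp_Icc a b y : a <= b -> Icc a b (clamp a b y).
Proof. unfold Icc, clamp, Rmax, Rmin; intros; repeat destruct Rle_dec; lra. Qed.

Lemma clamp_id a b y : Icc a b y -> clamp a b y = y.
Proof. unfold Icc, clamp, Rmax, Rmin; intros; repeat destruct Rle_dec; lra. Qed.

Lemma clamp_dist_le a b x y : Icc a b x -> Rabs (clamp a b y - x) <= Rabs (y - x).
Proof.
  unfold Icc, clamp, Rmax, Rmin; intros.
  repeat destruct Rle_dec; unfold Rabs; repeat destruct Rcase_abs; lra.
Qed.

Lemma extend_id a b f x : Icc a b x -> extend a b f x = f x.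
Proof. intros Hx; unfold extend; rewrite clamp_id; auto. Qed.

Lemma continuity_pt_extend a b f x :
  Icc a b x -> continuous_within (Icc a b) f x -> continuity_pt (extend a b f) x.
Proof.
  intros Hx H; apply continuity_pt_filterlim, filterlim_locally; intros eps.
  destruct (H eps (cond_pos eps)) as [d [Hd Hd']].
  exists (mkposreal d Hd); intros y Hy.
  change (Rabs (extend a b f y - extend a b f x) < eps).
  rewrite (extend_id a b f x Hx); apply Hd'.
  - apply clamp_Icc; unfold Icc in Hx; lra.
  - eapply Rle_lt_trans; [apply clamp_dist_le; auto | exact Hy].
Qed.

Lemma is_derive_extend a b f x l :
  a < x < b -> is_deriv_within f (Icc a b) x l -> is_derive (extend a b f) x l.
Proof.
  intros Hx H; apply is_derive_Reals; intros eps He.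
  destruct (proj1 (is_deriv_withinP _ _ x l) H eps He) as [d [Hd Hd']].
  set (r := Rmin d (Rmin (x - a) (b - x))).
  assert (Hr : 0 < r) by (unfold r; repeat apply Rmin_glb_lt; lra).
  exists (mkposreal r Hr); simpl; intros h Hh0 Hh.
  pose proof (Rmin_l d (Rmin (x - a) (b - x))).
  pose proof (Rmin_r d (Rmin (x - a) (b - x))).
  pose proof (Rmin_l (x - a) (b - x)); pose proof (Rmin_r (x - a) (b - x)).
  assert (Hxh : Icc a b (x + h)).
  { unfold Icc, r in *; revert Hh; unfold Rabs; destruct Rcase_abs; intros; lra. }
  rewrite (extend_id a b f (x + h) Hxh), (extend_id a b f x) by (unfold Icc; lra).
  replace h with (x + h - x) at 2 by ring.
  apply Hd'; auto.
  - lra.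
  - replace (x + h - x) with h by ring; unfold r in *; lra.
Qed.

Lemma extend_derive_continuity a b f f' :
  (forall x, Icc a b x -> is_deriv_within f (Icc a b) x (f' x)) ->
  (forall t, a < t < b -> is_derive (extend a b f) t (f' t)) /\
  (forall t, Icc a b t -> continuity_pt (extend a b f) t).
Proof.
  intros Hf; split.
  - intros t Ht; apply is_derive_extend; auto; apply Hf; unfold Icc; lra.
  - intros t Ht; apply continuity_pt_extend; auto.
    eapply is_deriv_within_continuous; auto.
Qed.

Lemma MVT_Icc F dF x y : x < y ->
  (forall t, x < t < y -> is_derive F t (dF t)) ->
  (forall t, x <= t <= y -> continuity_pt F t) ->
  exists c, x <= c <= y /\ F y - F x = dF c * (y - x).
Proof.
  intros Hxy HD HC; pose proof (MVT_gen F x y dF) as M; simpl in M.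
  rewrite Rmin_left, Rmax_right in M by lra; auto.
Qed.

Lemma cauchy_MVT_Icc F G dF dG x y : x < y ->
  (forall t, x < t < y -> is_derive F t (dF t)) ->
  (forall t, x < t < y -> is_derive G t (dG t)) ->
  (forall t, x <= t <= y -> continuity_pt F t) ->
  (forall t, x <= t <= y -> continuity_pt G t) ->
  exists c, x <= c <= y /\ (F y - F x) * dG c = (G y - G x) * dF c.
Proof.
  intros Hxy DF DG CF CG.
  set (A := G y - G x); set (B := F y - F x).
  destruct (MVT_Icc (fun t => F t * A - G t * B) (fun t => dF t * A - dG t * B) x y)
    as [c [Hc E]]; auto.
  - intros t Ht; auto_derive.
    + split; [eexists; apply DF | split; [eexists; apply DG | ]]; auto.
    + change (fun u => F u) with F; change (fun u => G u) with G.
      rewrite (is_derive_unique F t (dF t)), (is_derive_unique G t (dG t)); auto; ring.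
  - intros t Ht; apply continuity_pt_minus; apply continuity_pt_mult; auto;
      apply continuity_pt_const; intros u v; auto.
  - exists c; split; auto.
    assert (Z : (dF c * A - dG c * B) * (y - x) = 0) by (rewrite <- E; unfold A, B; ring).
    apply Rmult_integral in Z; destruct Z; lra.
Qed.

Lemma nondecreasing_on_Icc_of_derive F dF a b :
  (forall t, a < t < b -> is_derive F t (dF t)) ->
  (forall t, Icc a b t -> continuity_pt F t) ->
  (forall t, Icc a b t -> 0 <= dF t) ->
  nondecreasing_on (Icc a b) F.
Proof.
  intros HD HC Hpos x y Hx Hy Hxy.
  destruct (Req_dec x y) as [<- | Hne]; [lra |].
  unfold Icc in *.
  destruct (MVT_Icc F dF x y) as [c [Hc E]]; try lra.
  - intros t Ht; apply HD; lra.
  - intros t Ht; apply HC; unfold Icc; lra.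
  - assert (0 <= dF c) by (apply Hpos; unfold Icc; lra); nra.
Qed.

Lemma convex_on_Icc_of_chords lo hi f :
  (forall a m b, Icc lo hi a -> Icc lo hi b -> a < m < b ->
     (f m - f a) * (b - m) <= (f b - f m) * (m - a)) ->
  convex_on (Icc lo hi) f.
Proof.
  intros Hch a b t Ha Hb Ht.
  destruct (Req_dec t 0) as [-> | Ht0].
  { replace (0 * a + (1 - 0) * b) with b by ring; lra. }
  destruct (Req_dec t 1) as [-> | Ht1].
  { replace (1 * a + (1 - 1) * b) with a by ring; lra. }
  set (m := t * a + (1 - t) * b).
  destruct (Rtotal_order a b) as [Hab | [<- | Hab]].
  - assert (H := Hch a m b Ha Hb ltac:(unfold m; split; nra)).
    replace (b - m) with (t * (b - a)) in H by (unfold m; ring).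
    replace (m - a) with ((1 - t) * (b - a)) in H by (unfold m; ring).
    nra.
  - unfold m; replace (t * a + (1 - t) * a) with a by ring; lra.
  - assert (H := Hch b m a Hb Ha ltac:(unfold m; split; nra)).
    replace (a - m) with ((1 - t) * (a - b)) in H by (unfold m; ring).
    replace (m - b) with (t * (a - b)) in H by (unfold m; ring).
    nra.
Qed.

Section Inverse.

Variables (a b : R) (Q Q1 k : R -> R).
Hypothesis Q_incr : forall x y, Icc a b x -> Icc a b y -> x < y -> Q x < Q y.
Hypothesis k_range : forall q, Icc (Q a) (Q b) q -> Icc a b (k q).
Hypothesis Q_k : forall q, Icc (Q a) (Q b) q -> Q (k q) = q.

Lemma inverse_incr q1 q2 :
  Icc (Q a) (Q b) q1 -> Icc (Q a) (Q b) q2 -> q1 < q2 -> k q1 < k q2.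
Proof.
  intros H1 H2 Hq.
  destruct (Rtotal_order (k q1) (k q2)) as [| [E | Hgt]]; auto; exfalso.
  - rewrite <- (Q_k q1 H1), <- (Q_k q2 H2), E in Hq; lra.
  - pose proof (Q_incr _ _ (k_range q2 H2) (k_range q1 H1) Hgt).
    rewrite (Q_k q1 H1), (Q_k q2 H2) in *; lra.
Qed.

Let Q_le x y : Icc a b x -> Icc a b y -> x <= y -> Q x <= Q y.
Proof.
  intros Hx Hy Hxy; destruct (Req_dec x y) as [-> | Hne]; [lra |].
  left; apply Q_incr; auto; lra.
Qed.

Lemma inverse_continuous_within q :
  Icc (Q a) (Q b) q -> continuous_within (Icc (Q a) (Q b)) k q.
Proof.
  intros Hq eps He.
  pose proof (k_range q Hq) as Hx; pose proof (Q_k q Hq) as Eq.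
  set (x := k q) in *.
  (* no constraint is needed on a side where [x] is within [eps] of the boundary *)
  set (d1 := if Rle_dec (x + eps) b then Q (x + eps) - q else 1).
  set (d2 := if Rle_dec a (x - eps) then q - Q (x - eps) else 1).
  unfold Icc in Hx.
  assert (Hd1 : 0 < d1).
  { unfold d1; destruct (Rle_dec (x + eps) b); [| lra].
    assert (Q x < Q (x + eps)) by (apply Q_incr; unfold Icc; lra); lra. }
  assert (Hd2 : 0 < d2).
  { unfold d2; destruct (Rle_dec a (x - eps)); [| lra].
    assert (Q (x - eps) < Q x) by (apply Q_incr; unfold Icc; lra); lra. }
  exists (Rmin d1 d2); split; [apply Rmin_glb_lt; auto |].
  intros y Hy Hyq.
  pose proof (Rmin_l d1 d2); pose proof (Rmin_r d1 d2).
  pose proof (k_range y Hy) as Hz; pose proof (Q_k y Hy) as Ey.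
  set (z := k y) in *.
  destruct (Rlt_or_le (Rabs (z - x)) eps) as [| Hfar]; auto; exfalso.
  apply Rabs_def2 in Hyq; unfold Icc in Hz.
  revert Hfar; unfold Rabs; destruct Rcase_abs; intros Hfar.
  - unfold d2 in *; destruct (Rle_dec a (x - eps)); [| lra].
    assert (Q z <= Q (x - eps)) by (apply Q_le; unfold Icc; lra); lra.
  - unfold d1 in *; destruct (Rle_dec (x + eps) b); [| lra].
    assert (Q (x + eps) <= Q z) by (apply Q_le; unfold Icc; lra); lra.
Qed.

Hypothesis Q_deriv : forall x, Icc a b x -> is_deriv_within Q (Icc a b) x (Q1 x).
Hypothesis Q1_pos : forall x, Icc a b x -> 0 < Q1 x.

Lemma inverse_is_deriv_within q :
  Icc (Q a) (Q b) q -> is_deriv_within k (Icc (Q a) (Q b)) q (/ Q1 (k q)).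
Proof.
  intros Hq; apply is_deriv_withinP; intros eps He.
  pose proof (k_range q Hq) as Hx; pose proof (Q_k q Hq) as Eq.
  set (x := k q) in *.
  pose proof (Q1_pos x Hx) as HL; set (L := Q1 x) in *.
  (* [eta <= L/2] keeps the slope [r] of [Q] above [L/2]; then
     [|1/r - 1/L| = |r - L| / (r L) < 2 eta / L^2 <= eps]. *)
  set (eta := Rmin (L / 2) (eps * L * L / 2)).
  assert (HeL : 0 < eps * L * L) by (apply Rmult_lt_0_compat; [apply Rmult_lt_0_compat |]; lra).
  assert (Heta : 0 < eta) by (unfold eta; apply Rmin_glb_lt; lra).
  pose proof (Rmin_l (L / 2) (eps * L * L / 2)); pose proof (Rmin_r (L / 2) (eps * L * L / 2)).
  destruct (proj1 (is_deriv_withinP Q _ x L) (Q_deriv x Hx) eta Heta) as [dq [Hdq HQq]].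
  destruct (inverse_continuous_within q Hq dq Hdq) as [d [Hd Hkd]].
  exists d; split; auto; intros y Hy Hne Hyd.
  pose proof (k_range y Hy) as Hz; pose proof (Q_k y Hy) as Ey.
  set (z := k y) in *.
  assert (Hzx : z <> x) by (intros E; apply Hne; rewrite <- Ey, <- Eq, E; reflexivity).
  specialize (HQq z Hz Hzx (Hkd y Hy Hyd)); rewrite Ey, Eq in HQq.
  set (r := (y - q) / (z - x)) in *.
  assert (Hr : L / 2 < r) by (apply Rabs_def2 in HQq; unfold eta in *; lra).
  replace ((z - x) / (y - q) - / L) with ((L - r) / (r * L))
    by (unfold r; field; repeat split; lra).
  rewrite Rabs_div, (Rabs_right (r * L)) by nra.
  apply Rlt_div_l; [nra |].
  assert (eps * L * L / 2 < eps * (r * L)) by nra.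
  rewrite Rabs_minus_sym; unfold eta in *; lra.
Qed.

End Inverse.

Section FundamentalDiagram.

Variables (kc : R) (Q Q1 Q2 Q3 k : R -> R).
Hypothesis Q_deriv : forall x, Icc 0 kc x -> is_deriv_within Q (Icc 0 kc) x (Q1 x).
Hypothesis Q1_deriv : forall x, Icc 0 kc x -> is_deriv_within Q1 (Icc 0 kc) x (Q2 x).
Hypothesis Q2_deriv : forall x, Icc 0 kc x -> is_deriv_within Q2 (Icc 0 kc) x (Q3 x).
Hypothesis Q_nonneg : forall x, Icc 0 kc x -> 0 <= Q x.
Hypothesis Q1_pos : forall x, Icc 0 kc x -> 0 < Q1 x.
Hypothesis Q2_nonpos : forall x, Icc 0 kc x -> Q2 x <= 0.
Hypothesis Q3_nonpos : forall x, Icc 0 kc x -> Q3 x <= 0.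
Hypothesis Q_incr : forall x y, Icc 0 kc x -> Icc 0 kc y -> x < y -> Q x < Q y.
Hypothesis k_range : forall q, Icc (Q 0) (Q kc) q -> Icc 0 kc (k q).
Hypothesis Q_k : forall q, Icc (Q 0) (Q kc) q -> Q (k q) = q.

Definition dNdx (q : R) : R := q * / Q1 (k q) - k q.

(** [dNdx_at x] is [dNdx] at the flow [Q x] carried by density [x], and
    [dNdx_slope_at x] is the derivative of [dNdx] with respect to the flow there. *)
Definition dNdx_at (x : R) : R := Q x / Q1 x - x.

Definition dNdx_slope_at (x : R) : R := - Q x * Q2 x / Q1 x ^ 3.

Lemma dNdx_slope_at_nonneg x : Icc 0 kc x -> 0 <= dNdx_slope_at x.
Proof.
  intros Hx; pose proof (Q1_pos x Hx); pose proof (Q_nonneg x Hx).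
  pose proof (Q2_nonpos x Hx).
  unfold dNdx_slope_at, Rdiv; apply Rmult_le_pos; [nra |].
  left; apply Rinv_0_lt_compat, pow_lt; lra.
Qed.

Lemma dNdx_slope_at_nondecreasing : nondecreasing_on (Icc 0 kc) dNdx_slope_at.
Proof.
  destruct (extend_derive_continuity 0 kc Q Q1 Q_deriv) as [D0 C0].
  destruct (extend_derive_continuity 0 kc Q1 Q2 Q1_deriv) as [D1 C1].
  destruct (extend_derive_continuity 0 kc Q2 Q3 Q2_deriv) as [D2 C2].
  set (Qe := extend 0 kc Q) in *; set (Q1e := extend 0 kc Q1) in *;
    set (Q2e := extend 0 kc Q2) in *.
  set (dslope := fun t => (- Q1 t * Q2 t - Q t * Q3 t) / Q1 t ^ 3
                      + 3 * Q t * Q2 t ^ 2 / Q1 t ^ 4).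
  intros x y Hx Hy Hxy.
  rewrite <- (extend_id 0 kc dNdx_slope_at x Hx), <- (extend_id 0 kc dNdx_slope_at y Hy).
  revert x y Hx Hy Hxy.
  change (extend 0 kc dNdx_slope_at) with (fun t => - Qe t * Q2e t / Q1e t ^ 3).
  apply nondecreasing_on_Icc_of_derive with dslope.
  - intros t Ht; assert (Ht' : Icc 0 kc t) by (unfold Icc; lra).
    pose proof (Q1_pos t Ht').
    assert (E1 : Q1e t = Q1 t) by (apply extend_id; auto).
    pose proof (D0 t Ht) as D0t; pose proof (D1 t Ht) as D1t; pose proof (D2 t Ht) as D2t.
    auto_derive.
    + repeat split; try (eexists; eassumption).
      rewrite E1; apply Rgt_not_eq; repeat apply Rmult_lt_0_compat; lra.
    + change (fun u => Qe u) with Qe; change (fun u => Q1e u) with Q1e;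
        change (fun u => Q2e u) with Q2e.
      rewrite (is_derive_unique _ _ _ D0t), (is_derive_unique _ _ _ D1t),
        (is_derive_unique _ _ _ D2t), E1.
      unfold Qe, Q2e; rewrite !extend_id by exact Ht'.
      unfold dslope; field; lra.
  - intros t Ht; pose proof (Q1_pos t Ht).
    assert (E1 : Q1e t = Q1 t) by (apply extend_id; auto).
    apply continuity_pt_div.
    + apply continuity_pt_mult; [apply continuity_pt_opp |]; auto.
    + repeat (apply continuity_pt_mult; auto); apply continuity_pt_const; intros u v; auto.
    + rewrite E1; apply Rgt_not_eq; repeat apply Rmult_lt_0_compat; lra.
  - intros t Ht; pose proof (Q1_pos t Ht); pose proof (Q_nonneg t Ht).
    pose proof (Q2_nonpos t Ht); pose proof (Q3_nonpos t Ht).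
    unfold dslope; apply Rplus_le_le_0_compat; unfold Rdiv; apply Rmult_le_pos;
      try (left; apply Rinv_0_lt_compat, pow_lt; lra); nra.
Qed.

Lemma dNdx_at_increment x y : Icc 0 kc x -> Icc 0 kc y -> x < y ->
  exists c, x <= c <= y /\ dNdx_at y - dNdx_at x = dNdx_slope_at c * (Q y - Q x).
Proof.
  intros Hx Hy Hxy.
  destruct (extend_derive_continuity 0 kc Q Q1 Q_deriv) as [D0 C0].
  destruct (extend_derive_continuity 0 kc Q1 Q2 Q1_deriv) as [D1 C1].
  set (Qe := extend 0 kc Q) in *; set (Q1e := extend 0 kc Q1) in *.
  assert (Hsub : forall t, x <= t <= y -> Icc 0 kc t) by (unfold Icc in *; intros; lra).
  destruct (cauchy_MVT_Icc (fun t => Qe t / Q1e t - t) Qe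
              (fun t => - Q t * Q2 t / Q1 t ^ 2) Q1 x y) as [c [Hc E]]; auto.
  - intros t Ht; assert (Ht' : 0 < t < kc) by (unfold Icc in *; lra).
    pose proof (Q1_pos t (Hsub t ltac:(lra))).
    assert (E1 : Q1e t = Q1 t) by (apply extend_id, Hsub; lra).
    pose proof (D0 t Ht') as D0t; pose proof (D1 t Ht') as D1t.
    auto_derive.
    + repeat split; try (eexists; eassumption); lra.
    + change (fun u => Qe u) with Qe; change (fun u => Q1e u) with Q1e.
      rewrite (is_derive_unique _ _ _ D0t), (is_derive_unique _ _ _ D1t), E1.
      unfold Qe; rewrite extend_id by (apply Hsub; lra).
      field; lra.
  - intros t Ht; apply D0; unfold Icc in *; lra.
  - intros t Ht; pose proof (Q1_pos t (Hsub t Ht)).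
    assert (E1 : Q1e t = Q1 t) by (apply extend_id, Hsub; lra).
    apply continuity_pt_minus; [| apply continuity_pt_id].
    apply continuity_pt_div; auto; lra.
  - exists c; split; auto.
    unfold Qe, Q1e in E; rewrite !extend_id in E by auto.
    pose proof (Q1_pos c (Hsub c Hc)).
    apply Rmult_eq_reg_r with (Q1 c); [| lra].
    unfold dNdx_at, dNdx_slope_at; rewrite E; field; lra.
Qed.

Lemma dNdx_chord q1 q2 : Icc (Q 0) (Q kc) q1 -> Icc (Q 0) (Q kc) q2 -> q1 < q2 ->
  exists c, k q1 <= c <= k q2 /\ dNdx q2 - dNdx q1 = dNdx_slope_at c * (q2 - q1).
Proof.
  intros H1 H2 Hq.
  destruct (dNdx_at_increment (k q1) (k q2)) as [c [Hc E]]; auto.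
  - apply (inverse_incr 0 kc Q k); auto.
  - exists c; split; auto.
    unfold dNdx_at in E; rewrite !Q_k in E; auto.
Qed.

Lemma dNdx_nondecreasing : nondecreasing_on (Icc (Q 0) (Q kc)) dNdx.
Proof.
  intros q1 q2 H1 H2 Hq; destruct (Req_dec q1 q2) as [<- | Hne]; [lra |].
  destruct (dNdx_chord q1 q2 H1 H2) as [c [Hc E]]; [lra |].
  pose proof (k_range q1 H1); pose proof (k_range q2 H2).
  assert (0 <= dNdx_slope_at c) by (apply dNdx_slope_at_nonneg; unfold Icc in *; lra).
  nra.
Qed.

Lemma dNdx_convex : convex_on (Icc (Q 0) (Q kc)) dNdx.
Proof.
  apply convex_on_Icc_of_chords; intros q1 q q2 H1 H2 Hq.
  assert (H : Icc (Q 0) (Q kc) q) by (unfold Icc in *; lra).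
  destruct (dNdx_chord q1 q H1 H) as [c1 [Hc1 E1]]; [lra |].
  destruct (dNdx_chord q q2 H H2) as [c2 [Hc2 E2]]; [lra |].
  pose proof (k_range q1 H1); pose proof (k_range q2 H2).
  assert (dNdx_slope_at c1 <= dNdx_slope_at c2)
    by (apply dNdx_slope_at_nondecreasing; unfold Icc in *; lra).
  rewrite E1, E2.
  replace (dNdx_slope_at c2 * (q2 - q) * (q - q1))
    with (dNdx_slope_at c2 * (q - q1) * (q2 - q)) by ring.
  apply Rmult_le_compat_r, Rmult_le_compat_r; lra.
Qed.

End FundamentalDiagram.

Theorem lemma5
  (kcrit : R) (Q Q1 Q2 Q3 k : R -> R)
  (Hkc : 0 < kcrit)
  (* Q three times differentiable on [0, kcrit] with derivatives Q1, Q2, Q3 *)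
  (HQ1 : forall x, Icc 0 kcrit x -> is_deriv_within Q (Icc 0 kcrit) x (Q1 x))
  (HQ2 : forall x, Icc 0 kcrit x -> is_deriv_within Q1 (Icc 0 kcrit) x (Q2 x))
  (HQ3 : forall x, Icc 0 kcrit x -> is_deriv_within Q2 (Icc 0 kcrit) x (Q3 x))
  (* Q maps into [0, oo) *)
  (Hnonneg : forall x, Icc 0 kcrit x -> 0 <= Q x)
  (* strictly increasing with Q' > 0 *)
  (Hincr : forall x y, Icc 0 kcrit x -> Icc 0 kcrit y -> x < y -> Q x < Q y)
  (Hpos : forall x, Icc 0 kcrit x -> 0 < Q1 x)
  (* concave: Q'' <= 0 *)
  (Hconc : forall x, Icc 0 kcrit x -> Q2 x <= 0)
  (HQ0 : Q 0 = 0)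
  (* aggressive driving: Q''' <= 0 *)
  (H3 : forall x, Icc 0 kcrit x -> Q3 x <= 0)
  (* k is the inverse function of Q on [0, Q kcrit] *)
  (Hk_range : forall q, Icc 0 (Q kcrit) q -> Icc 0 kcrit (k q))
  (HQk : forall q, Icc 0 (Q kcrit) q -> Q (k q) = q)
  (HkQ : forall x, Icc 0 kcrit x -> k (Q x) = x) :
  exists dk : R -> R,
    (forall q, Icc 0 (Q kcrit) q -> is_deriv_within k (Icc 0 (Q kcrit)) q (dk q)) /\
    nondecreasing_on (Icc 0 (Q kcrit)) (fun q => q * dk q - k q) /\
    convex_on (Icc 0 (Q kcrit)) (fun q => q * dk q - k q).
Proof.
  assert (Hrange : Icc 0 (Q kcrit) = Icc (Q 0) (Q kcrit)) by (rewrite HQ0; reflexivity).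
  rewrite Hrange in Hk_range, HQk |- *.
  exists (fun q => / Q1 (k q)); split; [| split].
  - apply inverse_is_deriv_within; auto.
  - apply (dNdx_nondecreasing kcrit Q Q1 Q2 k); auto.
  - apply (dNdx_convex kcrit Q Q1 Q2 Q3 k); auto.
Qed.
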